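(* Let $\mathcal{L}$ be the Laplace operator on the real Euclidean space of $d\times d$ Hermitian matrices $M=(z_{ij})$ endowed with the inner product $\langle A,B\rangle=\mathrm{trace}(AB)$ (the generator of a Brownian Hermitian matrix), with carré du champ $\Gamma$ (extended complex-bilinearly to complex-valued functions), so that $\mathcal{L}(z_{ij})=0$. Let $P(X)=\det(X\,\mathrm{Id}-M)$. Then $$\Gamma\big(P(X),P(Y)\big)=\frac{1}{Y-X}\big(P'(X)P(Y)-P'(Y)P(X)\big),\qquad \mathcal{L}\big(P(X)\big)=-P''(X).$$
   Context: The carré du champ of a diffusion operator $\mathcal{L}$ is $\Gamma(f,g)=\frac12\big(\mathcal{L}(fg)-f\mathcal{L}g-g\mathcal{L}f\big)$. For this Laplacian one has $\Gamma(z_{ij},z_{kl})=\delta_{il}\delta_{jk}$ and $\Gamma(z_{ij},\bar z_{kl})=\delta_{ik}\delta_{jl}$. Derivatives $P'$, $P''$ are with respect to $X$. *)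

From HB Require Import structures.
From mathcomp Require Import all_boot all_order all_algebra all_field.
From mathcomp Require Import mpoly.
Set Implicit Arguments. Unset Strict Implicit. Unset Printing Implicit Defensive.
Import Order.TTheory GRing.Theory Num.Theory.
Local Open Scope ring_scope.

(* Complex-valued polynomial functions of the d*d real coordinates of a
   d x d Hermitian matrix.  Coordinate conventions (variable index
   mxvec_index i j):
     - (i,i)        : the real diagonal entry x_ii = z_ii,
     - (i,j), i<j   : real part of z_ij,
     - (j,i), i<j   : imaginary part of z_ij.                              *)
Definition HFun (d : nat) := {mpoly algC[d * d]}.

Definition hvar (d : nat) (i j : 'I_d) : HFun d := 'X_(mxvec_index i j).

Definition herm_coord (d : nat) : 'M[HFun d]_d :=
  \matrix_(i, j)
    if i == j then hvar i i
    else if (i < j)%N then hvar i j + 'i%:MP * hvar j i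
    else hvar j i - 'i%:MP * hvar i j.

(* Laplacian for the inner product <A,B> = tr(AB):  in these coordinates
   |M|^2 = sum x_ii^2 + 2 sum_{i<j} (a_ij^2 + b_ij^2), hence
   L = sum_i d^2/dx_ii^2 + 1/2 sum_{i<j} (d^2/da_ij^2 + d^2/db_ij^2). *)
Definition hlap (d : nat) (f : HFun d) : HFun d :=
  \sum_(i < d) \sum_(j < d)
     (if i == j then 1 else 2^-1 : algC) *:
       mderiv (mxvec_index i j) (mderiv (mxvec_index i j) f).

Definition hGamma (d : nat) (f g : HFun d) : HFun d :=
  (2^-1 : algC) *: (hlap (f * g) - f * hlap g - g * hlap f).

Definition charP (d : nat) : {poly HFun d} := char_poly (herm_coord d).

From HB Require Import structures.
From mathcomp Require Import all_boot all_order all_algebra all_field.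
From mathcomp Require Import mpoly.
From mathcomp Require Import perm ring zify.
Import Order.TTheory GRing.Theory Num.Theory.
Local Open Scope ring_scope.

(* Write A(x) = x - M, so that P(x) = det A(x).  Every coordinate derivative
   of M is a constant matrix E, so by Jacobi's formula a derivation D with
   D A = -E satisfies D (det A) = - tr (adj A E) and, differentiating
   adj A A = det A, det A * D^2 (det A) = tr (adj A E)^2 - tr (adj A E adj A E).
   Summed against the weights of L over the basis E_ab, these become
   Gamma(P(X), P(Y)) = tr (adj A(X) adj A(Y)) and
   det A * L (det A) = tr (adj A ^ 2) - (tr adj A)^2.  The same formulas for
   D = d/dX give P' = tr adj A and P P'' = (tr adj A)^2 - tr (adj A ^ 2), so
   L P = - P'' after cancelling det A(X) != 0; and the resolvent identity
   adj A(X) (A(Y) - A(X)) adj A(Y) = det A(Y) adj A(X) - det A(X) adj A(Y)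
   gives the formula for Gamma. *)

Set Implicit Arguments. Unset Strict Implicit. Unset Printing Implicit Defensive.

Section Derivation.
Variables (R : comNzRingType) (D : {additive R -> R}).
Hypothesis derivationM : forall a b, D (a * b) = D a * b + a * D b.

Lemma derivation1 : D 1 = 0.
Proof.
have := derivationM 1 1; rewrite !mul1r mulr1 => h.
by apply: (@addrI _ (D 1)); rewrite -h addr0.
Qed.

Lemma derivation_sign (b : bool) : D ((-1) ^+ b) = 0.
Proof. by case: b; rewrite ?expr0 ?expr1 ?raddfN derivation1 ?oppr0. Qed.

Lemma derivation_prod_seq (I : eqType) (r : seq I) (F : I -> R) : uniq r ->
  D (\prod_(k <- r) F k) = \sum_(i <- r) D (F i) * \prod_(k <- r | i != k) F k.
Proof.
elim: r => [|a r IH] /=; first by rewrite !big_nil derivation1.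
case/andP=> anr ur; rewrite big_cons derivationM IH // big_cons big_cons eqxx /=.
have -> : \prod_(k <- r | a != k) F k = \prod_(k <- r) F k.
  rewrite big_mkcond; apply: eq_big_seq => k kr.
  by have -> : a != k by apply: contraNneq anr => ->.
congr (_ + _); rewrite mulr_sumr; apply: eq_big_seq => i ir.
rewrite big_cons; have -> : i != a by apply: contraNneq anr => <-.
by rewrite mulrCA.
Qed.

Lemma derivation_prod (I : finType) (F : I -> R) :
  D (\prod_i F i) = \sum_i D (F i) * \prod_(k | i != k) F k.
Proof. exact/derivation_prod_seq/index_enum_uniq. Qed.

Lemma mxtrace_map_derivation n (A : 'M[R]_n) : \tr (map_mx D A) = D (\tr A).
Proof. by rewrite raddf_sum; apply: eq_bigr => i _; rewrite mxE. Qed.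

Lemma map_mx_derivationM m n p (A : 'M[R]_(m, n)) (B : 'M[R]_(n, p)) :
  map_mx D (A *m B) = map_mx D A *m B + A *m map_mx D B.
Proof.
apply/matrixP => i j; rewrite !mxE raddf_sum -big_split.
by apply: eq_bigr => k _; rewrite !mxE derivationM.
Qed.

Lemma map_mx_derivation_scalar n (a : R) : map_mx D (a%:M : 'M_n) = (D a)%:M.
Proof. by apply/matrixP => i j; rewrite !mxE raddfMn. Qed.

(* Jacobi's formula: the cofactor expansion along row i collects the terms
   of the Leibniz formula in which the derivation hits the factor A i (s i). *)
Lemma derivation_det n (A : 'M[R]_n) : D (\det A) = \tr (\adj A *m map_mx D A).
Proof.
rewrite /(\det A) raddf_sum.
under eq_bigr => s _ do
  rewrite derivationM derivation_sign mul0r add0r derivation_prod mulr_sumr.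
rewrite exchange_big /= /mxtrace.
transitivity (\sum_i \sum_j D (A i j) * cofactor A i j).
  apply: eq_bigr => i _; rewrite (partition_big (fun s : 'S_n => s i) predT) //=.
  apply: eq_bigr => j _; rewrite expand_cofactor big_distrr /=.
  by apply: eq_bigr => s /eqP <-; rewrite mulrCA.
rewrite exchange_big /=; apply: eq_bigr => i _; rewrite mxE.
by apply: eq_bigr => j _; rewrite !mxE mulrC.
Qed.

Lemma derivation2_det n (A E : 'M[R]_n) :
  map_mx D A = E -> map_mx D E = 0 ->
  \det A * D (D (\det A)) = \tr (\adj A *m E) ^+ 2 - \tr (\adj A *m E *m \adj A *m E).
Proof.
move=> DA DE.
(* Differentiate [adj A *m A = det A] and multiply by [adj A] on the right. *)
have det_Dadj : \det A *: map_mx D (\adj A) =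
    \tr (\adj A *m E) *: \adj A - \adj A *m E *m \adj A.
  have := congr1 (fun B => map_mx D B *m \adj A) (mul_adj_mx A).
  rewrite /= map_mx_derivationM map_mx_derivation_scalar derivation_det DA.
  rewrite mulmxDl -mulmxA mul_mx_adj mul_mx_scalar mul_scalar_mx => <-.
  by rewrite addrK.
rewrite derivation_det DA -mxtrace_map_derivation map_mx_derivationM DE mulmx0.
rewrite addr0 -mxtraceZ scalemxAl det_Dadj mulmxBl -scalemxAl raddfB /=.
by rewrite mxtraceZ expr2.
Qed.

End Derivation.

Lemma mxtrace_adj_resolvent (R : comNzRingType) n (A B : 'M[R]_n) (c : R) :
  B - A = c%:M ->
  c * \tr (\adj A *m \adj B) = \tr (\adj A) * \det B - \tr (\adj B) * \det A.
Proof.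
move=> BA; have := congr1 mxtrace (congr1 (fun C => \adj A *m C *m \adj B) BA).
rewrite /= mulmxBr mulmxBl -mulmxA mul_mx_adj mul_adj_mx !mul_mx_scalar -scalemxAl.
rewrite mul_scalar_mx raddfB /= !mxtraceZ => <-.
by rewrite mulrC [_ * \det A]mulrC.
Qed.

Lemma mderivXU n (R : nzRingType) (i j : 'I_n) :
  mderiv i ('X_j : {mpoly R[n]}) = (i == j)%:R.
Proof.
rewrite mderivX mnm1E; have [<-|_] := eqVneq i j; last by rewrite scale0r.
by rewrite (_ : (U_(i) - U_(i))%MM = 0%MM) ?mpolyX0 ?scale1r //; apply/mnmP => k;
  rewrite mnmBE subnn mnm0E.
Qed.

Section TraceDelta.
Variables (R : comNzRingType) (n : nat).
Implicit Types (P Q : 'M[R]_n) (a b c e : 'I_n).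

Lemma mulmx_delta_entry P a b i j : (P *m delta_mx a b) i j = P i a * (j == b)%:R.
Proof.
rewrite mxE (bigD1 a) //= big1 ?addr0; first by rewrite mxE eqxx.
by move=> k /negbTE nka; rewrite mxE nka mulr0.
Qed.

Lemma mxtrace_mul_delta P a b : \tr (P *m delta_mx a b) = P b a.
Proof.
rewrite /mxtrace (bigD1 b) //= big1 ?addr0; first by rewrite mulmx_delta_entry eqxx mulr1.
by move=> i /negbTE nib; rewrite mulmx_delta_entry nib mulr0.
Qed.

Lemma mxtrace_mul_delta2 P Q a b c e :
  \tr (P *m delta_mx a b *m Q *m delta_mx c e) = P e a * Q b c.
Proof.
rewrite mxtrace_mul_delta mxE (bigD1 b) //= big1 ?addr0.
  by rewrite mulmx_delta_entry eqxx mulr1.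
by move=> k /negbTE nkb; rewrite mulmx_delta_entry nkb mulr0 mul0r.
Qed.

Lemma mxtrace_sandwich_polar P Q (x y : 'M[R]_n) :
  \tr (P *m (x + y) *m Q *m (x + y)) - \tr (P *m (x - y) *m Q *m (x - y)) =
  (\tr (P *m x *m Q *m y) + \tr (P *m y *m Q *m x)) *+ 2.
Proof. rewrite !(mulmxDr, mulmxDl, mulmxN, mulNmx, mxtraceD, raddfN) /=; ring. Qed.

End TraceDelta.

Section HermitianBasis.
Variable d : nat.
Local Notation HF := (HFun d).
Local Notation D a b := (mderiv (mxvec_index a b)).

Lemma mxvec_index_eq (a b k l : 'I_d) :
  (mxvec_index a b == mxvec_index k l) = (a == k) && (b == l).
Proof.
by rewrite /mxvec_index (inj_eq (@cast_ord_inj _ _ _)) (inj_eq (@enum_rank_inj _)).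
Qed.

Lemma mderiv_hvar v (k l : 'I_d) : mderiv v (hvar k l) = (v == mxvec_index k l)%:R.
Proof. exact: mderivXU. Qed.

(* [hbasis a b] is the derivative of [herm_coord d] along the coordinate
   [(a, b)]; for the trace form, these matrices are orthogonal with squared
   norm [1] on the diagonal and [2] off it, whence the weights [hweight]. *)
Definition hbasis (a b : 'I_d) : 'M[HF]_d :=
  if a == b then delta_mx a a
  else if (a < b)%N then delta_mx a b + delta_mx b a
  else 'i%:MP *: (delta_mx b a - delta_mx a b).

Definition hweight (a b : 'I_d) : algC := if a == b then 1 else 2^-1.

Lemma hlapE (f : HF) : hlap f = \sum_a \sum_b hweight a b *: D a b (D a b f).
Proof. by []. Qed.

Ltac case_ord_eq :=
  repeat match goal with
  | H : is_true (?x != ?x) |- _ => by rewrite eqxx in H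
  | |- context[?x == ?y] =>
    let ne := fresh "ne" in
    have [?|ne] := eqVneq x y;
      [subst; rewrite ?eqxx /=
      | rewrite ?(negbTE ne); rewrite eq_sym in ne; rewrite ?(negbTE ne) /=]
  end;
  repeat match goal with
  | H : is_true (?x != ?y) |- _ => move: H; rewrite -(inj_eq val_inj) /= => ?
  end.

Lemma map_mderiv_herm_coord (a b : 'I_d) : map_mx (D a b) (herm_coord d) = hbasis a b.
Proof.
apply/matrixP => k l; rewrite /herm_coord /hbasis !mxE !(fun_if (D a b)).
rewrite !(mderivD, mderivB, mderivN, mderiv_mulC, mderiv_hvar, mxvec_index_eq).
have [<-|nab] := eqVneq a b; rewrite ?mxE.
  by case_ord_eq; rewrite ?mulr0 ?addr0 ?subr0 //; case: ifP; try lia.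
have [ab|ab] := boolP (a < b)%N; rewrite ?ab ?(negbTE ab) !mxE; case_ord_eq.
all: try (case: ifP => ?; try lia).
all: by rewrite ?(mulr0, mulr1, subrr, addr0, add0r, sub0r, subr0, mulrN1, oppr0).
Qed.

Lemma map_mderiv_hbasis v (a b : 'I_d) : map_mx (mderiv v) (hbasis a b) = 0.
Proof.
have Dnat (c : nat) : mderiv v (c%:R : HF) = 0 by rewrite -mpolyC_nat mderivC.
rewrite /hbasis; apply/matrixP => k l; case: ifP => _; [|case: ifP => _];
  by rewrite !mxE ?mderiv_mulC ?(mderivD, mderivN) !Dnat ?(oppr0, addr0, mulr0).
Qed.

End HermitianBasis.

Section HermitianCalculus.
Variable d : nat.
Local Notation HF := (HFun d).
Local Notation D a b := (mderiv (mxvec_index a b)).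

Lemma scale_half_mulr2n (x : HF) : (2^-1 : algC) *: (x *+ 2) = x.
Proof. by rewrite -scaler_nat scalerA mulVf ?scale1r ?pnatr_eq0. Qed.

Lemma scale_half_eq (x y : HF) : x = y *+ 2 -> (2^-1 : algC) *: x = y.
Proof. by move=> ->; apply: scale_half_mulr2n. Qed.

Lemma mulr2n_inj : injective (fun x : HF => x *+ 2).
Proof. by move=> x y /= e; rewrite -[x]scale_half_mulr2n e scale_half_mulr2n. Qed.

Lemma sum_pairs_eq (F G : 'I_d -> 'I_d -> HF) :
  (forall a b, F a b + F b a = G a b + G b a) ->
  \sum_a \sum_b F a b = \sum_a \sum_b G a b.
Proof.
have sum_pairs (H : 'I_d -> 'I_d -> HF) :
    (\sum_a \sum_b H a b) *+ 2 = \sum_a \sum_b (H a b + H b a).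
  rewrite mulr2n {2}exchange_big /= -big_split /=.
  by apply: eq_bigr => a _; rewrite -big_split.
move=> FG; apply: mulr2n_inj; rewrite /= !sum_pairs.
by apply: eq_bigr => a _; apply: eq_bigr => b _.
Qed.

Lemma mulCii_mpoly : 'i%:MP * 'i%:MP = -1 :> HF.
Proof. by rewrite -mpolyCM mulCii raddfN /= mpolyC1. Qed.

(* In coordinates, this is Γ(z_ij, z_kl) = δ_il δ_jk. *)
Lemma sum_hbasis_mxtraceM (P Q : 'M[HF]_d) :
  \sum_a \sum_b hweight a b *: (\tr (P *m hbasis a b) * \tr (Q *m hbasis a b)) =
  \tr (P *m Q).
Proof.
have -> : \tr (P *m Q) = \sum_a \sum_b P a b * Q b a.
  by apply: eq_bigr => a _; rewrite mxE.
apply: sum_pairs_eq => a b.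
have [<-|nab] := eqVneq a b.
  by rewrite /hweight /hbasis eqxx !mxtrace_mul_delta scale1r.
wlog ab : a b nab / (a < b)%N.
  move=> W; have [lt_ab|lt_ba|/val_inj eq_ab] := ltngtP a b; first exact: W.
    by rewrite addrC [RHS]addrC; apply: W; rewrite // eq_sym.
  by rewrite eq_ab eqxx in nab.
rewrite /hweight /hbasis (negbTE nab) eq_sym (negbTE nab) ab ltnNge ltnW //=.
rewrite -!scalemxAr !(mulmxDr, mulmxBr, mulmxN, mxtraceZ, mxtraceD, raddfB, raddfN) /=.
rewrite !mxtrace_mul_delta -scalerDr; apply: scale_half_eq.
rewrite mulrACA mulCii_mpoly; ring.
Qed.

(* In coordinates, this is Γ(z_ij, conj z_kl) = δ_ik δ_jl. *)
Lemma sum_hbasis_mxtrace_mulmx (P Q : 'M[HF]_d) :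
  \sum_a \sum_b hweight a b *: \tr (P *m hbasis a b *m Q *m hbasis a b) =
  \tr P * \tr Q.
Proof.
have -> : \tr P * \tr Q = \sum_a \sum_b P a a * Q b b.
  by rewrite mulr_suml; apply: eq_bigr => a _; rewrite mulr_sumr.
apply: sum_pairs_eq => a b.
have [<-|nab] := eqVneq a b.
  by rewrite /hweight /hbasis eqxx !mxtrace_mul_delta2 scale1r.
wlog ab : a b nab / (a < b)%N.
  move=> W; have [lt_ab|lt_ba|/val_inj eq_ab] := ltngtP a b; first exact: W.
    by rewrite addrC [RHS]addrC; apply: W; rewrite // eq_sym.
  by rewrite eq_ab eqxx in nab.
rewrite /hweight /hbasis (negbTE nab) eq_sym (negbTE nab) ab ltnNge ltnW //=.
rewrite -!scalemxAr -!scalemxAl !mxtraceZ mulrA mulCii_mpoly mulN1r -scalerDr.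
by apply: scale_half_eq; rewrite mxtrace_sandwich_polar !mxtrace_mul_delta2 addrC.
Qed.

Lemma hGammaE (f g : HF) :
  hGamma f g = \sum_a \sum_b hweight a b *: (D a b f * D a b g).
Proof.
rewrite /hGamma; apply: scale_half_eq; rewrite /hlap !mulr_sumr -!sumrB -sumrMnl.
apply: eq_bigr => a _; rewrite !mulr_sumr -!sumrB -sumrMnl; apply: eq_bigr => b _.
rewrite -!scalerAr -!scalerBr scalerMnr !mderivM mderivD !mderivM; congr (_ *: _).
ring.
Qed.

End HermitianCalculus.

Section CharacteristicPolynomial.
Variable d : nat.
Local Notation HF := (HFun d).
Local Notation M := (herm_coord d).
Local Notation D a b := (mderiv (mxvec_index a b)).

Definition charmx (x : HF) : 'M[HF]_d := x%:M - M.

Lemma map_horner_char_poly_mx (x : HF) :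
  map_mx (horner_eval x) (char_poly_mx M) = charmx x.
Proof.
apply/matrixP => i j; rewrite !mxE horner_evalE.
by rewrite hornerD hornerN hornerMn hornerX hornerC.
Qed.

Lemma horner_charP (x : HF) : (charP d).[x] = \det (charmx x).
Proof.
by rewrite /charP /char_poly -horner_evalE -det_map_mx map_horner_char_poly_mx.
Qed.

Lemma map_deriv_char_poly_mx : map_mx deriv (char_poly_mx M) = 1%:M.
Proof.
by apply/matrixP => i j; rewrite !mxE derivB derivMn derivX derivC subr0.
Qed.

Lemma charP_deriv : (charP d)^`() = \tr (\adj (char_poly_mx M)).
Proof.
by rewrite /charP /char_poly (derivation_det (@derivM _)) map_deriv_char_poly_mx mulmx1.
Qed.

Lemma charP_mul_derivn2 : charP d * (charP d)^`(2) =
  \tr (\adj (char_poly_mx M)) ^+ 2 - \tr (\adj (char_poly_mx M) *m \adj (char_poly_mx M)).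
Proof.
have Dscalar1 : map_mx deriv (1%:M : 'M[{poly HF}]_d) = 0.
  by apply/matrixP => i j; rewrite !mxE -polyC_natr derivC.
by have := derivation2_det (@derivM _) map_deriv_char_poly_mx Dscalar1; rewrite !mulmx1.
Qed.

Lemma horner_charP_deriv (x : HF) : (charP d)^`().[x] = \tr (\adj (charmx x)).
Proof.
by rewrite charP_deriv -horner_evalE -trace_map_mx map_mx_adj map_horner_char_poly_mx.
Qed.

Lemma horner_charP_derivn2 (x : HF) : \det (charmx x) * (charP d)^`(2).[x] =
  \tr (\adj (charmx x)) ^+ 2 - \tr (\adj (charmx x) *m \adj (charmx x)).
Proof.
rewrite -horner_charP -hornerM charP_mul_derivn2 -horner_evalE rmorphB rmorphXn /=.
by rewrite -!trace_map_mx map_mxM map_mx_adj map_horner_char_poly_mx.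
Qed.

Lemma map_mderiv_charmx (c : algC) (a b : 'I_d) :
  map_mx (D a b) (charmx c%:MP) = - hbasis a b.
Proof.
apply/matrixP => i j; rewrite -map_mderiv_herm_coord !mxE.
by rewrite mderivB mderivMn mderivC mul0rn sub0r.
Qed.

Lemma mderiv_det_charmx (c : algC) (a b : 'I_d) :
  D a b (\det (charmx c%:MP)) = - \tr (\adj (charmx c%:MP) *m hbasis a b).
Proof.
by rewrite (derivation_det (@mderivM _ _ _)) map_mderiv_charmx mulmxN raddfN.
Qed.

Lemma det_mul_mderiv2_charmx (c : algC) (a b : 'I_d) (A := charmx c%:MP) :
  \det A * D a b (D a b (\det A)) =
  \tr (\adj A *m hbasis a b) ^+ 2 - \tr (\adj A *m hbasis a b *m \adj A *m hbasis a b).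
Proof.
have DE : map_mx (D a b) (- hbasis a b) = 0.
  by rewrite map_mxN map_mderiv_hbasis oppr0.
rewrite (derivation2_det (@mderivM _ _ _) (map_mderiv_charmx c a b) DE).
by rewrite !mulmxN !mulNmx opprK raddfN sqrrN.
Qed.

Lemma hGamma_det_charmx (c e : algC) :
  hGamma (\det (charmx c%:MP)) (\det (charmx e%:MP)) =
  \tr (\adj (charmx c%:MP) *m \adj (charmx e%:MP)).
Proof.
rewrite hGammaE -sum_hbasis_mxtraceM.
by apply: eq_bigr => a _; apply: eq_bigr => b _; rewrite !mderiv_det_charmx mulrNN.
Qed.

Lemma det_mul_hlap_charmx (c : algC) (A := charmx c%:MP) :
  \det A * hlap (\det A) = \tr (\adj A *m \adj A) - \tr (\adj A) ^+ 2.
Proof.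
rewrite hlapE mulr_sumr.
under eq_bigr => a _ do rewrite mulr_sumr.
under eq_bigr => a _ do under eq_bigr => b _ do
  rewrite -scalerAr det_mul_mderiv2_charmx scalerBr.
under eq_bigr => a _ do rewrite sumrB.
by rewrite sumrB sum_hbasis_mxtraceM sum_hbasis_mxtrace_mulmx expr2.
Qed.

Lemma det_charmx_neq0 (c : algC) : \det (charmx c%:MP) != 0.
Proof.
(* At the point where M = (c - 1) Id, the matrix c - M is the identity. *)
pose v (k : 'I_(d * d)) := if [exists l, k == mxvec_index l l] then c - 1 else 0.
have v_offdiag (i j : 'I_d) : i != j -> v (mxvec_index i j) = 0.
  move=> nij; rewrite /v ifN //; apply/existsPn => l; rewrite mxvec_index_eq.
  by apply: contra nij => /andP[/eqP-> /eqP->].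
have eval_charmx : map_mx (meval v) (charmx c%:MP) = 1%:M.
  apply/matrixP => i j; rewrite !mxE mevalB mevalMn mevalC.
  have [->|nij] := eqVneq i j.
    rewrite /hvar mevalXU /v ifT; last by apply/existsP; exists j.
    by rewrite mulr1n opprB addrC subrK.
  have nji : j != i by rewrite eq_sym.
  by case: ifP => _; rewrite ?(mevalD, mevalN, mevalM, mevalC) /hvar !mevalXU
    !v_offdiag // ?(mulr0, addr0, subr0, oppr0, mulr0n).
apply: contra_neq (oner_neq0 algC) => det0.
by rewrite -(det1 _ d) -eval_charmx det_map_mx det0 rmorph0.
Qed.

End CharacteristicPolynomial.

Unset Implicit Arguments.

Theorem proposition5p5 (d : nat) (X Y : algC) :
  X != Y ->
  hGamma (charP d).[X%:MP] (charP d).[Y%:MP] =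
    (Y - X)^-1 *: ((charP d)^`().[X%:MP] * (charP d).[Y%:MP]
                   - (charP d)^`().[Y%:MP] * (charP d).[X%:MP])
  /\ hlap (charP d).[X%:MP] = - (charP d)^`(2).[X%:MP].
Proof.
move=> neqXY; rewrite !horner_charP; split.
  have neqYX : Y - X != 0 by rewrite subr_eq0 eq_sym.
  have resolvent : charmx Y%:MP - charmx X%:MP = ((Y - X)%:MP)%:M :> 'M[HFun d]_d.
    by rewrite /charmx opprB addrA subrK mpolyCB raddfB.
  rewrite !horner_charP_deriv -(mxtrace_adj_resolvent resolvent) mul_mpolyC.
  by rewrite scalerA mulVf // scale1r hGamma_det_charmx.
apply: (mulfI (det_charmx_neq0 d X)).
by rewrite det_mul_hlap_charmx mulrN horner_charP_derivn2 opprB.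
Qed.
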